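(* Fix $I_{ij},I_{jk},I_{ki}\in[0,\infty)$. Define $\rho_E:\mathbb{R}^3_{>0}\to\mathbb{R}^3_{>0}$ by $$\rho_E(r_i,r_j,r_k)=(l_{ij},l_{jk},l_{ki}),$$ where $$l_{ij}=\sqrt{r_i^2+r_j^2+2I_{ij}r_ir_j},\quad l_{jk}=\sqrt{r_j^2+r_k^2+2I_{jk}r_jr_k},\quad l_{ki}=\sqrt{r_k^2+r_i^2+2I_{ki}r_kr_i}.$$ Then $\rho_E$ is a smooth embedding. In particular, for any given positive $l_{ij},l_{jk},l_{ki}$ there is at most one $(r_i,r_j,r_k)\in\mathbb{R}^3_{>0}$ with $\rho_E(r_i,r_j,r_k)=(l_{ij},l_{jk},l_{ki})$. *)

From Stdlib Require Import Reals.
Open Scope R_scope.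

Definition pos3 (x y z : R) : Prop := 0 < x /\ 0 < y /\ 0 < z.

(* A distance on R^3 (l^1 distance; all norms on R^3 are equivalent). *)
Definition dist3 (x y z x' y' z' : R) : R :=
  Rabs (x - x') + Rabs (y - y') + Rabs (z - z').

Definition continuous_on_pos3 (g : R -> R -> R -> R) : Prop :=
  forall x y z, pos3 x y z ->
  forall eps, 0 < eps -> exists delta, 0 < delta /\
    forall x' y' z', pos3 x' y' z' -> dist3 x' y' z' x y z < delta ->
      Rabs (g x' y' z' - g x y z) < eps.

Definition partials_on_pos3 (g d1 d2 d3 : R -> R -> R -> R) : Prop :=
  forall x y z, pos3 x y z ->
    derivable_pt_lim (fun t => g t y z) x (d1 x y z) /\
    derivable_pt_lim (fun t => g x t z) y (d2 x y z) /\
    derivable_pt_lim (fun t => g x y t) z (d3 x y z).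

Fixpoint Ck_pos3 (k : nat) (g : R -> R -> R -> R) : Prop :=
  match k with
  | O => continuous_on_pos3 g
  | S k' => continuous_on_pos3 g /\
      exists d1 d2 d3, partials_on_pos3 g d1 d2 d3 /\
        Ck_pos3 k' d1 /\ Ck_pos3 k' d2 /\ Ck_pos3 k' d3
  end.

Definition smooth_pos3 (g : R -> R -> R -> R) : Prop := forall k, Ck_pos3 k g.

Definition comp1 (F : R -> R -> R -> R * R * R) : R -> R -> R -> R :=
  fun x y z => fst (fst (F x y z)).
Definition comp2 (F : R -> R -> R -> R * R * R) : R -> R -> R -> R :=
  fun x y z => snd (fst (F x y z)).
Definition comp3 (F : R -> R -> R -> R * R * R) : R -> R -> R -> R :=
  fun x y z => snd (F x y z).

Definition det3 (a11 a12 a13 a21 a22 a23 a31 a32 a33 : R) : R :=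
  a11 * (a22 * a33 - a23 * a32)
  - a12 * (a21 * a33 - a23 * a31)
  + a13 * (a21 * a32 - a22 * a31).

(* Immersion: at each point of R^3_{>0} the differential (Jacobian matrix of
   first partial derivatives of the components) is injective, i.e. (square
   case) has nonzero determinant. *)
Definition immersion_pos3 (F : R -> R -> R -> R * R * R) : Prop :=
  exists a11 a12 a13 a21 a22 a23 a31 a32 a33 : R -> R -> R -> R,
    partials_on_pos3 (comp1 F) a11 a12 a13 /\
    partials_on_pos3 (comp2 F) a21 a22 a23 /\
    partials_on_pos3 (comp3 F) a31 a32 a33 /\
    forall x y z, pos3 x y z ->
      det3 (a11 x y z) (a12 x y z) (a13 x y z)
           (a21 x y z) (a22 x y z) (a23 x y z)
           (a31 x y z) (a32 x y z) (a33 x y z) <> 0.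

Definition injective_pos3 (F : R -> R -> R -> R * R * R) : Prop :=
  forall x y z x' y' z', pos3 x y z -> pos3 x' y' z' ->
    F x y z = F x' y' z' -> x = x' /\ y = y' /\ z = z'.

(* The inverse of F (on its image) is continuous: F is a homeomorphism of
   R^3_{>0} onto its image with the subspace topology (together with the
   continuity of F, which is part of smoothness). *)
Definition inverse_continuous_pos3 (F : R -> R -> R -> R * R * R) : Prop :=
  forall x y z, pos3 x y z ->
  forall eps, 0 < eps -> exists delta, 0 < delta /\
    forall x' y' z', pos3 x' y' z' ->
      dist3 (comp1 F x' y' z') (comp2 F x' y' z') (comp3 F x' y' z')
            (comp1 F x y z) (comp2 F x y z) (comp3 F x y z) < delta ->
      dist3 x' y' z' x y z < eps.

Definition smooth_embedding_pos3 (F : R -> R -> R -> R * R * R) : Prop :=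
  (forall x y z, pos3 x y z -> pos3 (comp1 F x y z) (comp2 F x y z) (comp3 F x y z)) /\
  smooth_pos3 (comp1 F) /\ smooth_pos3 (comp2 F) /\ smooth_pos3 (comp3 F) /\
  immersion_pos3 F /\
  injective_pos3 F /\
  inverse_continuous_pos3 F.

Definition l_edge (I ra rb : R) : R := sqrt (ra ^ 2 + rb ^ 2 + 2 * I * ra * rb).

Definition rhoE (Iij Ijk Iki : R) (ri rj rk : R) : R * R * R :=
  (l_edge Iij ri rj, l_edge Ijk rj rk, l_edge Iki rk ri).

(* Write Q_I(a,b) = a^2 + b^2 + 2 I a b, so that the three components of
   rho_E are sqrt Q_Iij(x,y), sqrt Q_Ijk(y,z), sqrt Q_Iki(z,x).

   1. Smoothness.  The components are built from coordinates and constants by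
      +, *, square root and inverse.  We introduce a syntax of such terms with
      a symbolic partial derivative, prove it correct, prove that terms are
      continuous where they are regular, and conclude by induction on k that a
      term regular on the octant is C^k there for every k.
   2. Immersion.  The Jacobian has the cyclic zero pattern [A B 0; 0 C D; E 0 F]
      with positive entries, so its determinant ACF + BDE is positive.
   3. Embedding.  The increment of Q_I(a,b) is a combination of the increments
      of a and b with positive weights.  A sign argument around the triangle
      (if r_i moves a lot, r_j and r_k must move the opposite way, which the
      edge jk forbids) gives a Lipschitz bound |r' - r| <= e K(r) whenever the
      three squared lengths change by at most e.  With e = 0 this is
      injectivity; as squared lengths depend continuously on lengths it also
      gives continuity of the inverse. *)

From Stdlib Require Import Reals Lra Psatz FunctionalExtensionality.
Open Scope R_scope.

Inductive coord := X1 | X2 | X3.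

Definition proj (v : coord) (x y z : R) : R :=
  match v with X1 => x | X2 => y | X3 => z end.

Definition slice (g : R -> R -> R -> R) (v : coord) (x y z : R) : R -> R :=
  match v with
  | X1 => fun t => g t y z
  | X2 => fun t => g x t z
  | X3 => fun t => g x y t
  end.

Lemma slice_at_proj g v x y z : slice g v x y z (proj v x y z) = g x y z.
Proof. now destruct v. Qed.

Inductive term :=
  | Cst (c : R) | Var (v : coord)
  | Add (a b : term) | Mul (a b : term) | Sqrt (a : term) | Inv (a : term).

Fixpoint eval (e : term) (x y z : R) : R :=
  match e with
  | Cst c => c
  | Var v => proj v x y z
  | Add a b => eval a x y z + eval b x y z
  | Mul a b => eval a x y z * eval b x y z
  | Sqrt a => sqrt (eval a x y z)
  | Inv a => / eval a x y z
  end.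

(* e is regular at (x,y,z): square roots are taken of positive numbers and
   inverses of nonzero numbers, so e is differentiable and continuous there. *)
Fixpoint regular (e : term) (x y z : R) : Prop :=
  match e with
  | Add a b | Mul a b => regular a x y z /\ regular b x y z
  | Sqrt a => regular a x y z /\ 0 < eval a x y z
  | Inv a => regular a x y z /\ eval a x y z <> 0
  | _ => True
  end.

Definition coord_eqb (v w : coord) : bool :=
  match v, w with X1, X1 | X2, X2 | X3, X3 => true | _, _ => false end.

Fixpoint deriv (v : coord) (e : term) : term :=
  match e with
  | Cst _ => Cst 0
  | Var w => Cst (if coord_eqb v w then 1 else 0)
  | Add a b => Add (deriv v a) (deriv v b)
  | Mul a b => Add (Mul (deriv v a) b) (Mul a (deriv v b))
  | Sqrt a => Mul (deriv v a) (Inv (Mul (Cst 2) (Sqrt a)))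
  | Inv a => Mul (Cst (-1)) (Mul (deriv v a) (Inv (Mul a a)))
  end.

Lemma regular_deriv v e x y z : regular e x y z -> regular (deriv v e) x y z.
Proof.
  induction e as [c|w|a IHa b IHb|a IHa b IHb|a IHa|a IHa]; simpl; try tauto.
  - intros [Ha Hpos]; repeat split; auto.
    apply Rmult_integral_contrapositive; split; [lra|].
    apply Rgt_not_eq, sqrt_lt_R0; exact Hpos.
  - intros [Ha Hnz]; repeat split; auto.
Qed.

Lemma deriv_correct v e x y z : regular e x y z ->
  derivable_pt_lim (slice (eval e) v x y z) (proj v x y z) (eval (deriv v e) x y z).
Proof.
  induction e as [c|w|a IHa b IHb|a IHa b IHb|a IHa|a IHa]; simpl.
  - intros _. replace (slice _ v x y z) with (fct_cte c) by (destruct v; reflexivity).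
    apply derivable_pt_lim_const.
  - intros _. destruct v, w; simpl;
      first [apply derivable_pt_lim_id | apply derivable_pt_lim_const].
  - intros [Ha Hb].
    replace (slice _ v x y z) with (plus_fct (slice (eval a) v x y z) (slice (eval b) v x y z))
      by (destruct v; reflexivity).
    apply derivable_pt_lim_plus; auto.
  - intros [Ha Hb].
    replace (slice _ v x y z) with (mult_fct (slice (eval a) v x y z) (slice (eval b) v x y z))
      by (destruct v; reflexivity).
    pose proof (derivable_pt_lim_mult _ _ _ _ _ (IHa Ha) (IHb Hb)) as D.
    rewrite !slice_at_proj in D; exact D.
  - intros [Ha Hpos].
    replace (slice _ v x y z) with (comp sqrt (slice (eval a) v x y z))
      by (destruct v; reflexivity).
    rewrite Rmult_comm; apply derivable_pt_lim_comp; [auto|].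
    rewrite slice_at_proj; apply derivable_pt_lim_sqrt; exact Hpos.
  - intros [Ha Hnz].
    replace (slice _ v x y z) with (div_fct (fct_cte 1) (slice (eval a) v x y z))
      by (destruct v; extensionality t; unfold div_fct, fct_cte, Rdiv; simpl; ring).
    pose proof (derivable_pt_lim_div _ _ _ _ _ (derivable_pt_lim_const 1 (proj v x y z))
                  (IHa Ha) ltac:(rewrite slice_at_proj; exact Hnz)) as D.
    rewrite !slice_at_proj in D; unfold fct_cte, Rsqr in D.
    replace (-1 * _) with ((0 * eval a x y z - eval (deriv v a) x y z * 1)
                           / (eval a x y z * eval a x y z)) by (field; exact Hnz).
    exact D.
Qed.

Definition continuous_at3 (g : R -> R -> R -> R) (x y z : R) : Prop :=
  forall eps, 0 < eps -> exists delta, 0 < delta /\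
    forall x' y' z', dist3 x' y' z' x y z < delta ->
      Rabs (g x' y' z' - g x y z) < eps.

Lemma dist3_bounds x y z x' y' z' :
  Rabs (x' - x) <= dist3 x' y' z' x y z /\ Rabs (y' - y) <= dist3 x' y' z' x y z /\
  Rabs (z' - z) <= dist3 x' y' z' x y z.
Proof.
  unfold dist3.
  pose proof (Rabs_pos (x' - x)); pose proof (Rabs_pos (y' - y)); pose proof (Rabs_pos (z' - z)).
  lra.
Qed.

Lemma continuous_at3_const c x y z : continuous_at3 (fun _ _ _ => c) x y z.
Proof.
  intros eps Heps; exists 1; split; [lra|].
  intros; rewrite Rminus_diag, Rabs_R0; exact Heps.
Qed.

Lemma continuous_at3_proj v x y z : continuous_at3 (proj v) x y z.
Proof.
  intros eps Heps; exists eps; split; [exact Heps|].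
  intros x' y' z' Hd; pose proof (dist3_bounds x y z x' y' z'); destruct v; simpl; lra.
Qed.

Lemma continuous_at3_plus f g x y z : continuous_at3 f x y z -> continuous_at3 g x y z ->
  continuous_at3 (fun a b c => f a b c + g a b c) x y z.
Proof.
  intros Hf Hg eps Heps.
  destruct (Hf (eps / 2) ltac:(lra)) as [df [Hdf Cf]].
  destruct (Hg (eps / 2) ltac:(lra)) as [dg [Hdg Cg]].
  exists (Rmin df dg); split; [apply Rmin_pos; assumption|].
  intros x' y' z' Hd.
  pose proof (Rmin_l df dg); pose proof (Rmin_r df dg).
  specialize (Cf x' y' z' ltac:(lra)); specialize (Cg x' y' z' ltac:(lra)).
  replace (f x' y' z' + g x' y' z' - (f x y z + g x y z))
    with ((f x' y' z' - f x y z) + (g x' y' z' - g x y z)) by ring.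
  eapply Rle_lt_trans; [apply Rabs_triang|]; lra.
Qed.

Lemma continuous_at3_comp h g x y z :
  continuity_pt h (g x y z) -> continuous_at3 g x y z ->
  continuous_at3 (fun a b c => h (g a b c)) x y z.
Proof.
  intros Hh Hg eps Heps.
  destruct (Hh eps Heps) as [alpha [Halpha Ch]].
  destruct (Hg alpha Halpha) as [delta [Hdelta Cg]].
  exists delta; split; [exact Hdelta|]; intros x' y' z' Hd.
  destruct (Req_dec (g x' y' z') (g x y z)) as [E|E].
  - rewrite E, Rminus_diag, Rabs_R0; exact Heps.
  - apply (Ch (g x' y' z')); split; [split; [exact I|auto]|exact (Cg x' y' z' Hd)].
Qed.

(* Products reduce to sums and squares: f g = ((f + g)^2 - (f - g)^2) / 4. *)
Lemma continuous_at3_mult f g x y z : continuous_at3 f x y z -> continuous_at3 g x y z ->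
  continuous_at3 (fun a b c => f a b c * g a b c) x y z.
Proof.
  intros Hf Hg.
  assert (Hscaled_square : forall k u, continuity_pt (fun t => k * (t * t)) u).
  { intros k u; apply continuity_pt_mult; [apply continuity_pt_const; now intros ? ?|].
    apply continuity_pt_mult; apply derivable_continuous_pt, derivable_pt_id. }
  assert (Hopp : continuous_at3 (fun a b c => -1 * g a b c) x y z).
  { apply (continuous_at3_comp (fun t => -1 * t)); [|exact Hg].
    apply continuity_pt_mult; [apply continuity_pt_const; now intros ? ?|].
    apply derivable_continuous_pt, derivable_pt_id. }
  pose proof (continuous_at3_comp _ _ _ _ _ (Hscaled_square (/ 4) _)
                (continuous_at3_plus _ _ _ _ _ Hf Hg)) as Hsum.
  pose proof (continuous_at3_comp _ _ _ _ _ (Hscaled_square (- / 4) _)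
                (continuous_at3_plus _ _ _ _ _ Hf Hopp)) as Hdiff.
  pose proof (continuous_at3_plus _ _ _ _ _ Hsum Hdiff) as H.
  intros eps Heps; destruct (H eps Heps) as [delta [Hdelta C]].
  exists delta; split; [exact Hdelta|]; intros x' y' z' Hd.
  specialize (C x' y' z' Hd); simpl in C.
  replace (f x' y' z' * g x' y' z' - f x y z * g x y z) with
    (/ 4 * ((f x' y' z' + g x' y' z') * (f x' y' z' + g x' y' z')) +
     - / 4 * ((f x' y' z' + -1 * g x' y' z') * (f x' y' z' + -1 * g x' y' z')) -
     (/ 4 * ((f x y z + g x y z) * (f x y z + g x y z)) +
      - / 4 * ((f x y z + -1 * g x y z) * (f x y z + -1 * g x y z)))) by field.
  exact C.
Qed.

Lemma eval_continuous e x y z : regular e x y z -> continuous_at3 (eval e) x y z.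
Proof.
  induction e as [c|v|a IHa b IHb|a IHa b IHb|a IHa|a IHa]; simpl; intros Hreg.
  - apply continuous_at3_const.
  - apply continuous_at3_proj.
  - apply continuous_at3_plus; tauto.
  - apply continuous_at3_mult; tauto.
  - apply (continuous_at3_comp sqrt (eval a)); [apply sqrt_continuity_pt|]; tauto.
  - apply (continuous_at3_comp Rinv (eval a)); [|tauto].
    apply (continuity_pt_inv id); [apply derivable_continuous_pt, derivable_pt_id|].
    unfold id; tauto.
Qed.

Lemma regular_continuous_on_pos3 e :
  (forall x y z, pos3 x y z -> regular e x y z) -> continuous_on_pos3 (eval e).
Proof.
  intros Hreg x y z Hp eps Heps.
  destruct (eval_continuous e x y z (Hreg x y z Hp) eps Heps) as [delta [Hdelta C]].
  exists delta; split; [exact Hdelta|]; intros x' y' z' _; apply C.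
Qed.

(* A term regular on the whole octant is smooth there: its partial derivatives
   are again such terms. *)
Lemma eval_smooth e : (forall x y z, pos3 x y z -> regular e x y z) -> smooth_pos3 (eval e).
Proof.
  intros Hreg k; revert e Hreg.
  induction k as [|k IHk]; intros e Hreg; simpl.
  - exact (regular_continuous_on_pos3 e Hreg).
  - split; [exact (regular_continuous_on_pos3 e Hreg)|].
    exists (eval (deriv X1 e)), (eval (deriv X2 e)), (eval (deriv X3 e)); split.
    + intros x y z Hp.
      exact (conj (deriv_correct X1 e x y z (Hreg x y z Hp))
            (conj (deriv_correct X2 e x y z (Hreg x y z Hp))
                  (deriv_correct X3 e x y z (Hreg x y z Hp)))).
    + repeat split; apply IHk; intros; apply regular_deriv; auto.
Qed.

Definition quad (I a b : R) : R := a * a + b * b + 2 * I * a * b.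

Lemma l_edge_quad I a b : l_edge I a b = sqrt (quad I a b).
Proof. unfold l_edge, quad; f_equal; ring. Qed.

(* l_edge is symmetric, which gives its second partial from its first. *)
Lemma l_edge_sym I a b : l_edge I a b = l_edge I b a.
Proof. rewrite !l_edge_quad; unfold quad; f_equal; ring. Qed.

Lemma quad_pos I a b : 0 <= I -> 0 < a -> 0 < b -> 0 < quad I a b.
Proof.
  intros HI Ha Hb; unfold quad.
  assert (0 <= I * a * b) by (apply Rmult_le_pos; [apply Rmult_le_pos|]; lra).
  nra.
Qed.

Lemma l_edge_pos I a b : 0 <= I -> 0 < a -> 0 < b -> 0 < l_edge I a b.
Proof. intros; rewrite l_edge_quad; apply sqrt_lt_R0, quad_pos; assumption. Qed.

Lemma l_edge_sq I a b : 0 <= I -> 0 < a -> 0 < b -> l_edge I a b * l_edge I a b = quad I a b.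
Proof. intros; rewrite l_edge_quad; apply sqrt_sqrt, Rlt_le, quad_pos; assumption. Qed.

Definition edge_term (I : R) (u v : coord) : term :=
  Sqrt (Add (Add (Mul (Var u) (Var u)) (Mul (Var v) (Var v)))
            (Mul (Mul (Cst (2 * I)) (Var u)) (Var v))).

Lemma eval_edge_term I u v x y z :
  eval (edge_term I u v) x y z = l_edge I (proj u x y z) (proj v x y z).
Proof. rewrite l_edge_quad; reflexivity. Qed.

Lemma edge_term_regular I u v x y z : 0 <= I -> pos3 x y z -> regular (edge_term I u v) x y z.
Proof.
  intros HI [Hx [Hy Hz]]; simpl; repeat split.
  apply (quad_pos I); destruct u, v; simpl; assumption.
Qed.

Lemma edge_smooth I u v : 0 <= I ->
  smooth_pos3 (fun x y z => l_edge I (proj u x y z) (proj v x y z)).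
Proof.
  intros HI.
  replace (fun x y z => _) with (eval (edge_term I u v))
    by (do 3 (apply functional_extensionality; intro); apply eval_edge_term).
  apply eval_smooth; intros; apply edge_term_regular; assumption.
Qed.

Lemma l_edge_deriv_fst I a b : 0 <= I -> 0 < a -> 0 < b ->
  derivable_pt_lim (fun t => l_edge I t b) a ((a + I * b) / l_edge I a b).
Proof.
  intros HI Ha Hb.
  assert (Hp : pos3 a b 1) by (repeat split; lra).
  pose proof (deriv_correct X1 (edge_term I X1 X2) a b 1 (edge_term_regular I X1 X2 a b 1 HI Hp)) as D.
  replace (slice _ X1 a b 1) with (fun t => l_edge I t b) in D
    by (apply functional_extensionality; intro t; symmetry; apply eval_edge_term).
  replace ((a + I * b) / l_edge I a b) with (eval (deriv X1 (edge_term I X1 X2)) a b 1);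
    [exact D|].
  pose proof (l_edge_pos I a b HI Ha Hb) as Hl; rewrite l_edge_quad in Hl |- *.
  unfold quad in Hl |- *; simpl; field; lra.
Qed.

Lemma l_edge_deriv_snd I a b : 0 <= I -> 0 < a -> 0 < b ->
  derivable_pt_lim (fun t => l_edge I a t) b ((b + I * a) / l_edge I a b).
Proof.
  intros HI Ha Hb.
  replace (fun t => l_edge I a t) with (fun t => l_edge I t a)
    by (apply functional_extensionality; intro; apply l_edge_sym).
  rewrite l_edge_sym; apply l_edge_deriv_fst; assumption.
Qed.

(* A Jacobian with the cyclic zero pattern of rho_E. *)
Lemma det3_cyclic a b c d e f : det3 a b 0 0 c d e 0 f = a * c * f + b * d * e.
Proof. unfold det3; ring. Qed.

Lemma quad_increment I a b a' b' :
  quad I a' b' - quad I a b = (a' - a) * (a' + a + 2 * I * b') + (b' - b) * (b' + b + 2 * I * a).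
Proof. unfold quad; ring. Qed.

Lemma Rabs_le_bounds x e : Rabs x <= e -> - e <= x <= e.
Proof. pose proof (Rle_abs x); pose proof (Rle_abs (- x)); rewrite Rabs_Ropp in *; lra. Qed.

(* Three increments da, db, dc enter the
   three edge increments with nonnegative weights; if da is large, db and dc
   have the opposite sign, and then the edge (b,c) bounds db, hence da. *)
Lemma cyclic_increment_bound_nonneg da db dc p1 q1 p2 q2 p3 q3 m r e :
  0 <= da -> 0 < m -> m <= p1 -> m <= q3 -> 0 <= q1 -> 0 <= q2 -> 0 <= p3 ->
  0 < p2 -> 0 <= r -> q1 <= r * p2 ->
  Rabs (da * p1 + db * q1) <= e -> Rabs (db * p2 + dc * q2) <= e ->
  Rabs (dc * p3 + da * q3) <= e ->
  da * m <= e * (1 + r).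
Proof.
  intros Hda Hm Hm1 Hm3 Hq1 Hq2 Hp3 Hp2 Hr Hq1r E1 E2 E3.
  apply Rabs_le_bounds in E1, E2, E3.
  destruct (Rle_or_lt (da * m) e) as [Hsmall|Hlarge]; [nra|].
  assert (Hdb : db < 0) by nra.
  assert (Hdc : dc < 0) by nra.
  assert (Hdb_bound : - db * p2 <= e) by nra.
  assert (Hdb_q1 : - db * q1 <= r * e) by nra.
  nra.
Qed.

(* The same bound for increments of either sign (negate all three). *)
Lemma cyclic_increment_bound da db dc p1 q1 p2 q2 p3 q3 m r e :
  0 < m -> m <= p1 -> m <= q3 -> 0 <= q1 -> 0 <= q2 -> 0 <= p3 ->
  0 < p2 -> 0 <= r -> q1 <= r * p2 ->
  Rabs (da * p1 + db * q1) <= e -> Rabs (db * p2 + dc * q2) <= e ->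
  Rabs (dc * p3 + da * q3) <= e ->
  Rabs da * m <= e * (1 + r).
Proof.
  intros Hm Hm1 Hm3 Hq1 Hq2 Hp3 Hp2 Hr Hq1r E1 E2 E3.
  destruct (Rle_or_lt 0 da) as [Hda|Hda].
  - rewrite Rabs_right by lra.
    exact (cyclic_increment_bound_nonneg da db dc p1 q1 p2 q2 p3 q3 m r e
             Hda Hm Hm1 Hm3 Hq1 Hq2 Hp3 Hp2 Hr Hq1r E1 E2 E3).
  - rewrite Rabs_left by lra.
    rewrite <- Rabs_Ropp in E1, E2, E3.
    apply (cyclic_increment_bound_nonneg (- da) (- db) (- dc) p1 q1 p2 q2 p3 q3 m r e);
      try lra; [rewrite <- E1 | rewrite <- E2 | rewrite <- E3]; right; f_equal; ring.
Qed.

(* Lipschitz constant of the inverse in the first coordinate of an edge (a,b). *)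
Definition stab_const (I a b : R) : R := (2 + 2 * I * a / b) / a.

Lemma stab_const_pos I a b : 0 <= I -> 0 < a -> 0 < b -> 0 < stab_const I a b.
Proof.
  intros HI Ha Hb; unfold stab_const.
  assert (0 <= 2 * I * a / b) by (apply Rmult_le_pos; [nra|apply Rlt_le, Rinv_0_lt_compat; lra]).
  apply Rdiv_lt_0_compat; lra.
Qed.

Lemma radius_stability I1 I2 I3 a b c a' b' c' e :
  0 <= I1 -> 0 <= I2 -> 0 <= I3 ->
  0 < a -> 0 < b -> 0 < c -> 0 < a' -> 0 < b' -> 0 < c' ->
  Rabs (quad I1 a' b' - quad I1 a b) <= e ->
  Rabs (quad I2 b' c' - quad I2 b c) <= e ->
  Rabs (quad I3 c' a' - quad I3 c a) <= e ->
  Rabs (a' - a) <= e * stab_const I1 a b.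
Proof.
  intros H1 H2 H3 Ha Hb Hc Ha' Hb' Hc' E1 E2 E3.
  set (s := 2 * I1 * a / b).
  assert (Hs : 0 <= s) by (apply Rmult_le_pos; [nra|apply Rlt_le, Rinv_0_lt_compat; lra]).
  assert (Hsb : s * b = 2 * I1 * a) by (unfold s; field; lra).
  assert (He : 0 <= e) by (eapply Rle_trans; [apply Rabs_pos|exact E1]).
  rewrite quad_increment in E1, E2, E3.
  assert (B : Rabs (a' - a) * a <= e * (1 + (1 + s))).
  { apply (cyclic_increment_bound (a' - a) (b' - b) (c' - c)
             (a' + a + 2 * I1 * b') (b' + b + 2 * I1 * a)
             (b' + b + 2 * I2 * c') (c' + c + 2 * I2 * b)
             (c' + c + 2 * I3 * a') (a' + a + 2 * I3 * c) a (1 + s) e);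
      try assumption; try nra.
    assert (0 <= s * b') by nra.
    assert (0 <= (1 + s) * (2 * I2 * c')) by (apply Rmult_le_pos; nra).
    nra. }
  unfold stab_const; fold s.
  apply (Rmult_le_reg_r a); [exact Ha|].
  replace (e * ((2 + s) / a) * a) with (e * (1 + (1 + s))) by (field; lra).
  exact B.
Qed.

(* Jacobian of rho_E: row l_ij = (A, B, 0), row l_jk = (0, C, D),
   row l_ki = (E, 0, F) with positive entries, so det = ACF + BDE > 0. *)
Lemma rhoE_immersion Iij Ijk Iki : 0 <= Iij -> 0 <= Ijk -> 0 <= Iki ->
  immersion_pos3 (rhoE Iij Ijk Iki).
Proof.
  intros H1 H2 H3.
  exists (fun x y z => (x + Iij * y) / l_edge Iij x y),
         (fun x y z => (y + Iij * x) / l_edge Iij x y), (fun _ _ _ => 0),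
         (fun _ _ _ => 0), (fun x y z => (y + Ijk * z) / l_edge Ijk y z),
         (fun x y z => (z + Ijk * y) / l_edge Ijk y z),
         (fun x y z => (x + Iki * z) / l_edge Iki z x), (fun _ _ _ => 0),
         (fun x y z => (z + Iki * x) / l_edge Iki z x).
  split; [|split; [|split]]; intros x y z [Hx [Hy Hz]];
    [repeat split; first [apply derivable_pt_lim_const
                         | apply l_edge_deriv_fst; assumption
                         | apply l_edge_deriv_snd; assumption] ..|].
  rewrite det3_cyclic.
  apply Rgt_not_eq, Rplus_lt_0_compat;
    (apply Rmult_lt_0_compat; [apply Rmult_lt_0_compat|]);
    (apply Rdiv_lt_0_compat; [nra|apply l_edge_pos; assumption]).
Qed.

Definition rhoE_const (Iij Ijk Iki x y z : R) : R :=
  stab_const Iij x y + stab_const Ijk y z + stab_const Iki z x.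

Lemma rhoE_stability Iij Ijk Iki x y z x' y' z' e :
  0 <= Iij -> 0 <= Ijk -> 0 <= Iki -> pos3 x y z -> pos3 x' y' z' ->
  Rabs (quad Iij x' y' - quad Iij x y) <= e ->
  Rabs (quad Ijk y' z' - quad Ijk y z) <= e ->
  Rabs (quad Iki z' x' - quad Iki z x) <= e ->
  dist3 x' y' z' x y z <= e * rhoE_const Iij Ijk Iki x y z.
Proof.
  intros H1 H2 H3 [Hx [Hy Hz]] [Hx' [Hy' Hz']] E1 E2 E3.
  pose proof (radius_stability Iij Ijk Iki x y z x' y' z' e) as Bx.
  pose proof (radius_stability Ijk Iki Iij y z x y' z' x' e) as By.
  pose proof (radius_stability Iki Iij Ijk z x y z' x' y' e) as Bz.
  unfold dist3, rhoE_const; rewrite !Rmult_plus_distr_l.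
  apply Rplus_le_compat; [apply Rplus_le_compat|]; auto.
Qed.

(* Equal images have equal squared lengths: the stability estimate with e = 0. *)
Lemma rhoE_injective Iij Ijk Iki : 0 <= Iij -> 0 <= Ijk -> 0 <= Iki ->
  injective_pos3 (rhoE Iij Ijk Iki).
Proof.
  intros H1 H2 H3 x y z x' y' z' Hp Hp' E.
  injection E as E1 E2 E3.
  destruct Hp as [Hx [Hy Hz]], Hp' as [Hx' [Hy' Hz']].
  assert (Hsame : forall I a b a' b', 0 <= I -> 0 < a -> 0 < b -> 0 < a' -> 0 < b' ->
            l_edge I a b = l_edge I a' b' -> Rabs (quad I a' b' - quad I a b) <= 0).
  { intros I a b a' b' HI Ha Hb Ha' Hb' El.
    rewrite <- (l_edge_sq I a b), <- (l_edge_sq I a' b'), El by assumption.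
    rewrite Rminus_diag, Rabs_R0; lra. }
  pose proof (rhoE_stability Iij Ijk Iki x y z x' y' z' 0 H1 H2 H3
    (conj Hx (conj Hy Hz)) (conj Hx' (conj Hy' Hz'))
    (Hsame _ _ _ _ _ H1 Hx Hy Hx' Hy' E1) (Hsame _ _ _ _ _ H2 Hy Hz Hy' Hz' E2)
    (Hsame _ _ _ _ _ H3 Hz Hx Hz' Hx' E3)) as D.
  rewrite Rmult_0_l in D.
  pose proof (dist3_bounds x y z x' y' z') as [Bx [By Bz]].
  assert (Hzero : forall u, Rabs u <= 0 -> u = 0).
  { intros u Hu; destruct (Req_dec u 0) as [|Hne]; [assumption|].
    exfalso; pose proof (Rabs_pos u); apply (Rabs_no_R0 u Hne); lra. }
  assert (x' - x = 0) by (apply Hzero; lra).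
  assert (y' - y = 0) by (apply Hzero; lra).
  assert (z' - z = 0) by (apply Hzero; lra).
  lra.
Qed.

Lemma sq_increment s s' delta : 0 <= s -> 0 <= s' -> delta <= 1 -> Rabs (s' - s) < delta ->
  Rabs (s' * s' - s * s) <= delta * (2 * s + 1).
Proof.
  intros Hs Hs' Hd Hlt.
  replace (s' * s' - s * s) with ((s' - s) * (s' + s)) by ring.
  rewrite Rabs_mult, (Rabs_right (s' + s)) by lra.
  pose proof (Rle_abs (s' - s)); pose proof (Rabs_pos (s' - s)).
  apply Rmult_le_compat; lra.
Qed.

(* Close lengths give close squared lengths, hence close radii by the
   stability estimate: the inverse of rho_E is continuous. *)
Lemma rhoE_inverse_continuous Iij Ijk Iki : 0 <= Iij -> 0 <= Ijk -> 0 <= Iki ->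
  inverse_continuous_pos3 (rhoE Iij Ijk Iki).
Proof.
  intros H1 H2 H3 x y z Hp eps Heps.
  pose proof Hp as [Hx [Hy Hz]].
  set (l1 := l_edge Iij x y); set (l2 := l_edge Ijk y z); set (l3 := l_edge Iki z x).
  assert (0 < l1) by (apply l_edge_pos; assumption).
  assert (0 < l2) by (apply l_edge_pos; assumption).
  assert (0 < l3) by (apply l_edge_pos; assumption).
  set (L := 2 * (l1 + l2 + l3) + 1).
  set (K := rhoE_const Iij Ijk Iki x y z).
  assert (HK : 0 < K).
  { unfold K, rhoE_const.
    pose proof (stab_const_pos Iij x y H1 Hx Hy); pose proof (stab_const_pos Ijk y z H2 Hy Hz);
    pose proof (stab_const_pos Iki z x H3 Hz Hx); lra. }
  assert (HLK : 0 < L * K) by (apply Rmult_lt_0_compat; [unfold L; lra|exact HK]).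
  set (delta := Rmin 1 (eps / (2 * (L * K)))).
  assert (Hd1 : delta <= 1) by apply Rmin_l.
  assert (Hd2 : delta <= eps / (2 * (L * K))) by apply Rmin_r.
  assert (Hdpos : 0 < delta) by (apply Rmin_pos; [lra|apply Rdiv_lt_0_compat; lra]).
  exists delta; split; [exact Hdpos|].
  intros x' y' z' Hp' D; pose proof Hp' as [Hx' [Hy' Hz']].
  change (dist3 (l_edge Iij x' y') (l_edge Ijk y' z') (l_edge Iki z' x') l1 l2 l3 < delta) in D.
  pose proof (dist3_bounds l1 l2 l3 (l_edge Iij x' y') (l_edge Ijk y' z') (l_edge Iki z' x'))
    as [B1 [B2 B3]].
  assert (Hquad : forall I a b a' b' l, 0 <= I -> 0 < a -> 0 < b -> 0 < a' -> 0 < b' ->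
            l = l_edge I a b -> 2 * l + 1 <= L -> Rabs (l_edge I a' b' - l) < delta ->
            Rabs (quad I a' b' - quad I a b) <= delta * L).
  { intros I a b a' b' l HI Ha Hb Ha' Hb' El HlL Hl.
    subst l; rewrite <- (l_edge_sq I a b), <- (l_edge_sq I a' b') by assumption.
    apply Rle_trans with (delta * (2 * l_edge I a b + 1)); [|apply Rmult_le_compat_l; lra].
    apply sq_increment; try lra; left; apply l_edge_pos; assumption. }
  pose proof (rhoE_stability Iij Ijk Iki x y z x' y' z' (delta * L) H1 H2 H3 Hp Hp'
    (Hquad _ _ _ _ _ l1 H1 Hx Hy Hx' Hy' eq_refl ltac:(unfold L; lra) ltac:(lra))
    (Hquad _ _ _ _ _ l2 H2 Hy Hz Hy' Hz' eq_refl ltac:(unfold L; lra) ltac:(lra))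
    (Hquad _ _ _ _ _ l3 H3 Hz Hx Hz' Hx' eq_refl ltac:(unfold L; lra) ltac:(lra))) as S.
  fold K in S.
  assert (delta * L * K <= eps / 2).
  { replace (eps / 2) with (eps / (2 * (L * K)) * (L * K))
      by (field; split; apply Rgt_not_eq; [exact HK|unfold L; lra]).
    rewrite Rmult_assoc; apply Rmult_le_compat_r; lra. }
  lra.
Qed.

Theorem mainTheorem2 (Iij Ijk Iki : R) :
  0 <= Iij -> 0 <= Ijk -> 0 <= Iki ->
  smooth_embedding_pos3 (rhoE Iij Ijk Iki) /\
  (forall lij ljk lki : R, 0 < lij -> 0 < ljk -> 0 < lki ->
   forall ri rj rk ri' rj' rk' : R,
     pos3 ri rj rk -> pos3 ri' rj' rk' ->
     rhoE Iij Ijk Iki ri rj rk = (lij, ljk, lki) ->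
     rhoE Iij Ijk Iki ri' rj' rk' = (lij, ljk, lki) ->
     ri = ri' /\ rj = rj' /\ rk = rk').
Proof.
  intros H1 H2 H3.
  assert (Hinj := rhoE_injective Iij Ijk Iki H1 H2 H3).
  split.
  - split; [|split; [|split; [|split; [|split; [|split]]]]].
    + intros x y z [Hx [Hy Hz]]; repeat split; apply l_edge_pos; assumption.
    + exact (edge_smooth Iij X1 X2 H1).
    + exact (edge_smooth Ijk X2 X3 H2).
    + exact (edge_smooth Iki X3 X1 H3).
    + exact (rhoE_immersion Iij Ijk Iki H1 H2 H3).
    + exact Hinj.
    + exact (rhoE_inverse_continuous Iij Ijk Iki H1 H2 H3).
  - intros lij ljk lki _ _ _ ri rj rk ri' rj' rk' Hp Hp' E E'.
    apply Hinj; [assumption|assumption|congruence].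
Qed.
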